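(* Let $G=(V,E,L)$ be a parity graph with priorities in an index $I$, started from a vertex $p_0$. If $G$ is not even, then for every index $J$ with $\min(J)\in\{1,2\}$ and every $N\in\mathbb{N}$, Adam wins the priority transduction game $\mathrm{Reg}^J_N(G)$.
   Context: An index is a nonempty finite interval of $\mathbb{N}$. A sequence of priorities is parity accepting if its $\limsup$ is even. A parity graph is $(V,E,L)$ with $V$ countable, $E\subseteq V\times V$ (every vertex having an outgoing edge), $L:E\to I$; it is even if every infinite path from the start vertex has parity accepting priority sequence. Priority transduction game $\mathrm{Reg}^J_N(G)$: configurations consist of a current vertex, registers $r_j\in I$ for each $j$ with $2j\in J$ (plus $r_0$ if $1\in J$), and counters $c_{i,j}\in\mathbb{N}$ for odd $i\in I$ and register indices $j$. Initially the vertex is $p_0$, counters are $0$, registers are $\min(I)$. At each step: (a) Adam chooses an outgoing edge $e$ and the vertex is updated; (b) Eve chooses a register $r_j$; (c) output $w$: $w=1$ if $j=0$; else $w=2j$ if $r_j$ is even; else if $c_{r_j,j}=N$ then $w=2j+1$, $c_{r_j,j}:=0$, and Eve loses immediately if $2j+1\notin J$; else $w=2j$ and $c_{r_j,j}:=c_{r_j,j}+1$; (d) if $L(e)$ is even, $i:=L(e)$, else Eve chooses an odd $i\in I$ with $i\ge L(e)$; then $c_{i',j}:=0$ for all $i'<i$, $c_{r_j,j'}:=0$ for all $j'<j$, $r_{j'}:=\max(i,r_{j'})$ for all $j'>j$, and $r_j:=i$. Eve wins iff she never loses immediately and the output sequence is parity accepting; otherwise Adam wins. *)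

From mathcomp Require Import all_boot.
Set Implicit Arguments.
Unset Strict Implicit.
Unset Printing Implicit Defensive.

(* An index [lo, hi] (lo <= hi) is represented by its two endpoints. *)
Definition inI (lo hi x : nat) : bool := (lo <= x) && (x <= hi).

(* limsup of a nat sequence is (finite and) even:
   some even m occurs infinitely often and is eventually an upper bound. *)
Definition parity_accepting (u : nat -> nat) : Prop :=
  exists m, ~~ odd m /\
    (forall n, exists k, n <= k /\ u k = m) /\
    (exists n0, forall k, n0 <= k -> u k <= m).

Section Graph.
Variable V : Type.

Definition is_path (E : V -> V -> Prop) (p0 : V) (pi : nat -> V) : Prop :=
  pi 0 = p0 /\ forall k, E (pi k) (pi k.+1).

Definition even_graph (E : V -> V -> Prop) (L : V -> V -> nat) (p0 : V) : Prop :=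
  forall pi, is_path E p0 pi -> parity_accepting (fun k => L (pi k) (pi k.+1)).
End Graph.

(* configuration minus the current vertex: registers r_j and counters c_{i,j} *)
Record config := Config { reg : nat -> nat; cnt : nat -> nat -> nat }.

Definition is_reg (jlo jhi j : nat) : bool :=
  inI jlo jhi (2 * j) || ((j == 0) && inI jlo jhi 1).

Definition init_config (lo : nat) : config :=
  Config (fun _ => lo) (fun _ _ => 0).

(* One step, after Adam chose an edge with label l:
   Eve chose register j and (used only if l is odd) priority ich.
   Returns (output w, "Eve loses immediately", new configuration). *)
Definition game_step (N jlo jhi : nat) (s : config) (l j ich : nat)
  : nat * bool * config :=
  let r := reg s in
  let c := cnt s in
  let '(w, lose, c1) :=
    if j == 0 then (1, false, c)
    else if ~~ odd (r j) then (2 * j, false, c)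
    else if c (r j) j == N then
      (2 * j + 1, ~~ inI jlo jhi (2 * j + 1),
       fun i' j' => if (i' == r j) && (j' == j) then 0 else c i' j')
    else
      (2 * j, false,
       fun i' j' => if (i' == r j) && (j' == j) then (c i' j').+1 else c i' j')
  in
  let i := if odd l then ich else l in
  let c2 := fun i' j' =>
    if ((j' == j) && (i' < i)) || ((i' == r j) && (j' < j)) then 0 else c1 i' j' in
  let r2 := fun j' =>
    if j' == j then i else if j < j' then maxn i (r j') else r j' in
  (w, lose, Config r2 c2).

Section Play.
Variables (V : Type) (L : V -> V -> nat) (lo N jlo jhi : nat).
(* a play: pi k = vertex before step k (pi 0 = p0), pi k.+1 chosen by Adam
   at step k; jj k and ii k are Eve's choices at step k *)
Variables (pi : nat -> V) (jj ii : nat -> nat).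

Fixpoint conf_at (k : nat) : config :=
  match k with
  | 0 => init_config lo
  | k'.+1 => (game_step N jlo jhi (conf_at k') (L (pi k') (pi k'.+1)) (jj k') (ii k')).2
  end.

Definition out_at (k : nat) : nat :=
  (game_step N jlo jhi (conf_at k) (L (pi k) (pi k.+1)) (jj k) (ii k)).1.1.

Definition lose_at (k : nat) : bool :=
  (game_step N jlo jhi (conf_at k) (L (pi k) (pi k.+1)) (jj k) (ii k)).1.2.

Definition eve_wins_play : Prop :=
  (forall k, ~~ lose_at k) /\ parity_accepting out_at.
End Play.

Definition history (V : Type) (pi : nat -> V) (jj ii : nat -> nat) (k : nat)
  : seq (V * nat * nat) :=
  [seq (pi t.+1, jj t, ii t) | t <- iota 0 k].

Definition current_vertex (V : Type) (p0 : V) (h : seq (V * nat * nat)) : V :=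
  last p0 [seq x.1.1 | x <- h].

Definition adam_wins (V : Type) (E : V -> V -> Prop) (L : V -> V -> nat)
  (lo hi : nat) (p0 : V) (jlo jhi N : nat) : Prop :=
  exists sigma : seq (V * nat * nat) -> V,
    (forall h, E (current_vertex p0 h) (sigma h)) /\
    forall (pi : nat -> V) (jj ii : nat -> nat),
      pi 0 = p0 ->
      (forall k, pi k.+1 = sigma (history pi jj ii k)) ->
      (forall k, is_reg jlo jhi (jj k) &&
         (odd (L (pi k) (pi k.+1)) ==>
            [&& odd (ii k), inI lo hi (ii k) & L (pi k) (pi k.+1) <= ii k])) ->
      ~ eve_wins_play L lo N jlo jhi pi jj ii.

From mathcomp Require Import all_boot zify.
From Stdlib Require Import Classical ClassicalEpsilon FunctionalExtensionality.

Set Implicit Arguments.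
Unset Strict Implicit.
Unset Printing Implicit Defensive.

(* Adam follows a path of G whose priority sequence has odd limsup.  Suppose
   Eve's output had even limsup 2j.  Then eventually she only selects
   registers j' <= j and never outputs 2j+1, while the priorities i entering
   phase (d) have an odd limsup M (they dominate the path's priorities and
   coincide with them when even).  From then on r_j stays at most M, becomes M
   whenever i = M and keeps that value until r_j is next selected; each such
   selection increments c_{M,j}, which is never reset any more.  So c_{M,j}
   would exceed N. *)

Definition is_limsup (u : nat -> nat) (m : nat) : Prop :=
  (forall n, exists k, n <= k /\ u k = m) /\
  (exists n0, forall k, n0 <= k -> u k <= m).

Lemma bounded_limsup (B : nat) (u : nat -> nat) :
  (forall k, u k <= B) -> exists m, is_limsup u m.
Proof.
elim: B u => [|B IH] u u_le.
  exists 0; split; last by exists 0.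
  by move=> n; exists n; split=> //; apply/eqP; rewrite -leqn0.
have [B1_io|] := classic (forall n, exists k, n <= k /\ u k = B.+1).
  by exists B.+1; split=> //; exists 0.
move=> /not_all_ex_not[n0 B1_late].
have shift_le k : u (k + n0) <= B.
  rewrite -ltnS ltn_neqAle u_le andbT; apply/eqP => uB.
  by apply: B1_late; exists (k + n0); rewrite leq_addl.
have [m [m_io [n1 m_ub]]] := IH _ shift_le.
exists m; split.
  move=> n; have [k [le_nk <-]] := m_io n.
  by exists (k + n0); split; first exact: leq_trans le_nk (leq_addr _ _).
exists (n1 + n0) => k le_k.
have -> : k = (k - n0) + n0 by lia.
apply: m_ub; lia.
Qed.

Definition chosen_priority (l ich : nat) : nat := if odd l then ich else l.

Section GameStep.
Variables (N jlo jhi : nat) (s : config) (l j ich : nat).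
Let step := game_step N jlo jhi s l j ich.

Lemma game_step_output_gt0 : 0 < step.1.1.
Proof.
rewrite /step /game_step; case: eqP => [//|j_neq0].
by case: ifP => _ /=; [|case: ifP => _ /=]; lia.
Qed.

Lemma game_step_output_half : step.1.1./2 = j.
Proof.
rewrite /step /game_step; case: eqP => [-> //|_].
by case: ifP => _ /=; [|case: ifP => _ /=]; lia.
Qed.

Lemma reg_game_step j' :
  reg step.2 j' = if j' == j then chosen_priority l ich
  else if j < j' then maxn (chosen_priority l ich) (reg s j') else reg s j'.
Proof.
by rewrite /step /game_step; case: eqP => _ //=; case: ifP => _ //=; case: ifP.
Qed.

Lemma cnt_game_step_le :
  (forall a b, cnt s a b <= N) -> forall a b, cnt step.2 a b <= N.
Proof.
move=> cnt_le a b; rewrite /step /game_step; case: eqP => _ /=; first by case: ifP.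
case: ifP => _ /=; first by case: ifP.
case: ifP => cnt_N /=; case: ifP => // _; case: ifP => // /andP[/eqP-> /eqP->].
by rewrite ltn_neqAle cnt_N cnt_le.
Qed.

Lemma cnt_game_step_nondecr m j' :
  chosen_priority l ich <= m -> j <= j' -> step.1.1 != 2 * j' + 1 ->
  cnt s m j' <= cnt step.2 m j'.
Proof.
rewrite /chosen_priority /step /game_step => le_im le_jj'.
have no_reset : ((j' == j) && (m < if odd l then ich else l)) ||
                ((m == reg s j) && (j' < j)) = false.
  by rewrite ltnNge le_im ltnNge le_jj' !andbF.
case: (j =P 0) => _; last case: ifP => _; last case: ifP => _; rewrite /= no_reset //.
- by case: ifP => // /andP[/eqP-> /eqP->]; rewrite eqxx.
- by case: ifP.
Qed.

Lemma cnt_game_step_incr :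
  chosen_priority l ich <= reg s j -> 0 < j -> odd (reg s j) ->
  step.1.1 != 2 * j + 1 -> cnt step.2 (reg s j) j = (cnt s (reg s j) j).+1.
Proof.
rewrite /chosen_priority => le_ir j_gt0 odd_r; rewrite /step /game_step.
have no_reset : ((j == j) && (reg s j < if odd l then ich else l)) ||
                ((reg s j == reg s j) && (j < j)) = false.
  by rewrite ltnNge le_ir ltnn !andbF.
rewrite (negbTE (lt0n_neq0 j_gt0)) odd_r /=.
by case: ifP => /= [_|_ _]; rewrite no_reset /= ?eqxx.
Qed.
End GameStep.

Section Play.
Variables (V : Type) (L : V -> V -> nat) (lo hi N jlo jhi : nat).
Variables (pi : nat -> V) (jj ii : nat -> nat).
Let lab k := L (pi k) (pi k.+1).
Let prio k := chosen_priority (lab k) (ii k).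
Let conf := conf_at L lo N jlo jhi pi jj ii.
Let out := out_at L lo N jlo jhi pi jj ii.

Lemma cnt_conf_at_le k a b : cnt (conf k) a b <= N.
Proof. by elim: k a b => [//|k IH] a b; apply: cnt_game_step_le. Qed.

Lemma output_half k : (out k)./2 = jj k.
Proof. exact: game_step_output_half. Qed.

Lemma output_gt0 k : 0 < out k.
Proof. exact: game_step_output_gt0. Qed.

Section StablePhase.
Variables (k1 js M : nat).
Hypothesis M_odd : odd M.
Hypothesis js_gt0 : 0 < js.
Hypothesis jj_k1 : jj k1 = js.
Hypothesis stable :
  forall k, k1 <= k -> [/\ prio k <= M, jj k <= js & out k != 2 * js + 1].
Hypothesis prio_io : forall n, exists k, n <= k /\ prio k = M.
Hypothesis jj_io : forall n, exists k, n <= k /\ jj k = js.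

Lemma reg_stable_le k : k1 < k -> reg (conf k) js <= M.
Proof.
elim: k => [//|k IH]; rewrite ltnS => le_k1k; have [prio_le _ _] := stable le_k1k.
rewrite reg_game_step; case: eqP => [_|jj_neq]; first exact: prio_le.
have {}IH : reg (conf k) js <= M.
  apply: IH; rewrite ltn_neqAle le_k1k andbT.
  by apply/eqP => k1k; apply: jj_neq; rewrite -k1k jj_k1.
by case: ifP => // _; rewrite geq_max prio_le IH.
Qed.

Lemma reg_stable_set k : k1 < k -> prio k = M -> reg (conf k.+1) js = M.
Proof.
move=> lt_k1k prio_M; have [_ jj_le _] := stable (ltnW lt_k1k).
rewrite reg_game_step; case: eqP => // jj_neq.
rewrite ltn_neqAle eq_sym (introF eqP jj_neq) jj_le /=.
by rewrite -/(prio k) prio_M; apply/maxn_idPl; exact: reg_stable_le.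
Qed.

Lemma reg_stable_keep k :
  k1 <= k -> reg (conf k) js = M -> jj k != js -> reg (conf k.+1) js = M.
Proof.
move=> le_k1k reg_M jj_neq; have [prio_le jj_le _] := stable le_k1k.
rewrite reg_game_step eq_sym (negbTE jj_neq) ltn_neqAle jj_neq jj_le reg_M.
exact/maxn_idPr.
Qed.

Lemma reg_stable_persist k d :
  k1 <= k -> reg (conf k) js = M -> (forall t, t < d -> jj (k + t) != js) ->
  reg (conf (k + d)) js = M.
Proof.
move=> le_k1k reg_M; elim: d => [|d IH] jj_neq; first by rewrite addn0.
rewrite addnS; apply: reg_stable_keep; last exact: jj_neq.
- exact: leq_trans le_k1k (leq_addr _ _).
- by apply: IH => t /ltnW; apply: jj_neq.
Qed.

Lemma reg_stable_at_choice n :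
  exists k, [/\ n <= k, jj k = js & reg (conf k) js = M].
Proof.
have [k [le_k prio_M]] := prio_io (maxn n k1.+1).
move: le_k; rewrite geq_max => /andP[le_nk lt_k1k].
have js_later : exists d, jj (k.+1 + d) == js.
  have [k' [le_k' jj_k']] := jj_io k.+1.
  by exists (k' - k.+1); rewrite subnKC // jj_k'.
have [d /eqP jj_d d_min] := ex_minnP js_later.
exists (k.+1 + d); split=> //; first by rewrite (leq_trans le_nk) // addSnnS leq_addr.
apply: reg_stable_persist => [||t lt_td]; first exact: leq_trans (ltnW lt_k1k) _.
  exact: reg_stable_set.
apply/eqP => jj_t.
by have := d_min t; rewrite jj_t eqxx leqNgt lt_td => /(_ isT).
Qed.

Let cM k := cnt (conf k) M js.

Lemma cnt_stable_nondecr k d : k1 <= k -> cM k <= cM (k + d).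
Proof.
move=> le_k1k; elim: d => [|d IH]; first by rewrite addn0.
apply: leq_trans IH _; rewrite addnS.
have [prio_le jj_le out_neq] := stable (leq_trans le_k1k (leq_addr d k)).
exact: cnt_game_step_nondecr prio_le jj_le out_neq.
Qed.

Lemma cnt_stable_incr k :
  k1 <= k -> jj k = js -> reg (conf k) js = M -> cM k.+1 = (cM k).+1.
Proof.
move=> le_k1k jj_k reg_M; have [prio_le _ out_neq] := stable le_k1k.
rewrite -jj_k in out_neq.
by rewrite /cM -reg_M -jj_k; apply: cnt_game_step_incr; rewrite // jj_k ?reg_M.
Qed.

Lemma cnt_stable_unbounded p : exists2 k, k1 <= k & p <= cM k.
Proof.
elim: p => [|p [k le_k1k le_pk]]; first by exists k1.
have [k' [le_kk' jj_k' reg_M]] := reg_stable_at_choice k.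
have le_k1k' := leq_trans le_k1k le_kk'.
exists k'.+1; first exact: leq_trans le_k1k' (leqnSn k').
rewrite cnt_stable_incr // ltnS (leq_trans le_pk) //.
by rewrite -(subnKC le_kk') cnt_stable_nondecr.
Qed.

End StablePhase.

Hypothesis lab_le : forall k, lab k <= hi.
Hypothesis prio_legal :
  forall k, odd (lab k) -> [&& odd (ii k), lab k <= ii k & ii k <= hi].

Lemma chosen_priority_limsup_odd :
  ~ parity_accepting lab -> exists2 M, odd M & is_limsup prio M.
Proof.
move=> lab_rejecting.
have prio_le k : prio k <= hi.
  by rewrite /prio /chosen_priority; case: ifP => [/prio_legal/and3P[]|].
have [M [M_io [n0 M_ub]]] := bounded_limsup prio_le.
exists M; last by split=> //; exists n0.
apply: contraT => M_even; exfalso; apply: lab_rejecting; exists M; split=> //; split.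
  move=> n; have [k [le_nk prio_M]] := M_io n; exists k; split=> //.
  move: prio_M; rewrite /prio /chosen_priority.
  case: ifP => // /prio_legal/and3P[odd_ii _ _] ii_M.
  by rewrite ii_M (negbTE M_even) in odd_ii.
exists n0 => k /M_ub; apply: leq_trans.
by rewrite /prio /chosen_priority; case: ifP => // /prio_legal/and3P[].
Qed.

Lemma output_rejecting : ~ parity_accepting lab -> ~ parity_accepting out.
Proof.
move=> /chosen_priority_limsup_odd[M M_odd [prio_io [n0 prio_ub]]].
move=> [m [m_even [m_io [n1 out_ub]]]].
set js := m./2; have m_js : m = 2 * js by rewrite mul2n even_halfK.
have jj_io n : exists k, n <= k /\ jj k = js.
  by have [k [le_nk out_m]] := m_io n; exists k; rewrite -output_half out_m.
have js_gt0 : 0 < js.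
  by have [k [_ out_m]] := m_io 0; have := output_gt0 k; rewrite out_m m_js muln_gt0.
have [k1 [le_k1 jj_k1]] := jj_io (maxn n0 n1).
have stable k : k1 <= k -> [/\ prio k <= M, jj k <= js & out k != 2 * js + 1].
  move=> /(leq_trans le_k1); rewrite geq_max => /andP[/prio_ub prio_le /out_ub out_le].
  split=> //; first by rewrite -output_half half_leq.
  by apply: contraTneq out_le => ->; rewrite m_js addn1 ltnn.
have [k _ cnt_big] :=
  cnt_stable_unbounded M_odd js_gt0 jj_k1 stable prio_io jj_io N.+1.
by have := cnt_conf_at_le k M js; rewrite leqNgt cnt_big.
Qed.

End Play.

Lemma current_vertex_history (V : Type) (p0 : V) (pi : nat -> V) (jj ii : nat -> nat) k :
  pi 0 = p0 -> current_vertex p0 (history pi jj ii k) = pi k.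
Proof.
move=> pi0; rewrite /current_vertex /history -map_comp.
by elim: k => [//|k IH]; rewrite -addn1 iotaD map_cat last_cat IH add0n addn1.
Qed.

Section FollowPath.
Variables (V : eqType) (E : V -> V -> Prop) (p0 : V) (rho : nat -> V) (next : V -> V).
Hypothesis rho_ok : is_path E p0 rho.
Hypothesis next_edge : forall v, E v (next v).

(* Along a play consistent with this strategy the current vertex is always
   [rho (size h)]; [next] only makes the strategy total. *)
Definition follow_path (h : seq (V * nat * nat)) : V :=
  let v := current_vertex p0 h in
  if v == rho (size h) then rho (size h).+1 else next v.

Lemma follow_path_edge h : E (current_vertex p0 h) (follow_path h).
Proof.
by rewrite /follow_path; case: eqP => [->|_]; [apply: rho_ok.2 | apply: next_edge].
Qed.

Lemma play_follow_path (pi : nat -> V) (jj ii : nat -> nat) :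
  pi 0 = p0 -> (forall k, pi k.+1 = follow_path (history pi jj ii k)) ->
  forall k, pi k = rho k.
Proof.
move=> pi0 pi_follow; elim=> [|k IH]; first by rewrite pi0 rho_ok.1.
by rewrite pi_follow /follow_path current_vertex_history // size_map size_iota IH eqxx.
Qed.

End FollowPath.

Lemma exists_rejecting_path (V : Type) (E : V -> V -> Prop) (L : V -> V -> nat) (p0 : V) :
  ~ even_graph E L p0 ->
  exists2 rho, is_path E p0 rho & ~ parity_accepting (fun k => L (rho k) (rho k.+1)).
Proof.
move=> not_even; apply: NNPP => no_rho; apply: not_even => rho rho_ok.
by apply: NNPP => rho_rej; apply: no_rho; exists rho.
Qed.

Theorem lemma2 (V : countType) (E : V -> V -> Prop) (lo hi : nat)
  (L : V -> V -> nat) (p0 : V) :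
  lo <= hi ->
  (forall v, exists w, E v w) ->
  (forall v w, E v w -> inI lo hi (L v w)) ->
  ~ even_graph E L p0 ->
  forall (jlo jhi N : nat), jlo <= jhi -> (jlo == 1) || (jlo == 2) ->
    adam_wins E L lo hi p0 jlo jhi N.
Proof.
move=> _ has_succ lab_in not_even jlo jhi N _ _.
have [rho rho_ok rho_rej] := exists_rejecting_path not_even.
have [next next_edge] := choice E has_succ.
exists (follow_path p0 rho next); split; first exact: follow_path_edge.
move=> pi jj ii pi0 pi_follow legal [_ out_acc].
have pi_rho := functional_extensionality _ _ (play_follow_path rho_ok pi0 pi_follow).
rewrite {}pi_rho in legal out_acc.
apply: (output_rejecting (hi := hi)) rho_rej out_acc => [k | k odd_lab].
  by have /andP[] := lab_in _ _ (rho_ok.2 k).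
have /andP[_ /implyP/(_ odd_lab)] := legal k.
by case/and3P=> -> /andP[_ ->] ->.
Qed.
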